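(* Let $X$ be an idempotent Frobenius semiring and $n\ge1$. Then for every $j$ with $1\le j\le n$ and all $d_1\ge d_2\ge\dots\ge d_j$ in $\mathbb{N}$, $$\mathrm{Sym}_n(x_1^{d_1}\cdots x_j^{d_j})=e_j^{d_j}\cdot\mathrm{Sym}_n\big(x_1^{d_1-d_j}\cdots x_{j-1}^{d_{j-1}-d_j}\big)$$ as functions $X^n\to X$.
   Context: A semiring $(X,+,0,\cdot)$: $(X,+,0)$ commutative monoid, $(X,\cdot)$ semigroup, distributivity, $0$ absorbing. Idempotent: $x+x=x$. A Frobenius semiring is a unital commutative semiring with $(x+y)^n=x^n+y^n$ for all $x,y$, $n\ge1$. For a polynomial $p:X^n\to X$, $\mathrm{Sym}_n(p)(x_1,\dots,x_n)=\sum_{\sigma\in S_n}p(x_{\sigma(1)},\dots,x_{\sigma(n)})$; monomials in $x_1,\dots,x_j$ are regarded as functions of all $n$ variables. $e_j(x_1,\dots,x_n)$ is the sum of all products of $j$ distinct variables among $x_1,\dots,x_n$. *)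

From HB Require Import structures.
From mathcomp Require Import all_boot all_order all_algebra all_fingroup.
Set Implicit Arguments. Unset Strict Implicit. Unset Printing Implicit Defensive.
Import GRing.Theory.
Local Open Scope ring_scope.

(* A unital commutative semiring (0 absorbing, distributive) is a
   MathComp [comPzSemiRingType]. *)

Definition idempotent_semiring (X : comPzSemiRingType) : Prop :=
  forall x : X, x + x = x.

Definition frobenius_semiring (X : comPzSemiRingType) : Prop :=
  forall (x y : X) (k : nat), (0 < k)%N -> (x + y) ^+ k = x ^+ k + y ^+ k.

Definition SymPoly (X : comPzSemiRingType) (n : nat) (p : ('I_n -> X) -> X)
  (x : 'I_n -> X) : X :=
  \sum_(s : 'S_n) p (fun i => x (s i)).

(* the monomial x_1^{d_1} ... x_m^{d_m} (0-indexed: x_0^{d 0} ... x_{m-1}^{d (m-1)}),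
   regarded as a function of all n variables *)
Definition monom (X : comPzSemiRingType) (n m : nat) (d : nat -> nat)
  (x : 'I_n -> X) : X :=
  \prod_(i < n | (i < m)%N) x i ^+ d i.

Definition elem_sym (X : comPzSemiRingType) (n j : nat) (x : 'I_n -> X) : X :=
  \sum_(S : {set 'I_n} | #|S| == j) \prod_(i in S) x i.

(* In an idempotent semiring, a <= b :<-> a + b = b is a partial order in which sums are
   joins, so the two sides can be compared monomial by monomial.  With
   c = d_j, Frobenius expands e_j^c into the sum of the monomials
   prod_(k in S) x_k^c over the j-sets S, so the right-hand side is the join of
   the monomials with exponent c [k in S] + e (t k), where e i = d_i - c for
   i < j - 1 and e i = 0 otherwise.  Every monomial of the left-hand side has
   this form, with S the positions receiving the j largest exponents.
   Conversely, Frobenius and idempotency give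
   x_u^a x_s^b <= x_u^(a+b) + x_s^(a+b); applied to a position u outside S
   carrying a part of e and a position s in S carrying none, it bounds a
   right-hand monomial by two with fewer such positions u, and when none is
   left the monomial is a permuted x^d. *)

From HB Require Import structures.
From mathcomp Require Import all_boot all_order all_algebra all_fingroup.
From mathcomp Require Import zify.
Set Implicit Arguments. Unset Strict Implicit. Unset Printing Implicit Defensive.
Import GRing.Theory.
Local Open Scope ring_scope.

Section IdempotentOrder.
Variable X : comPzSemiRingType.

Definition sle (a b : X) := a + b = b.

Lemma sle_trans (a b c : X) : sle a b -> sle b c -> sle a c.
Proof. by rewrite /sle => ab bc; rewrite -bc addrA ab. Qed.

Lemma sle_anti (a b : X) : sle a b -> sle b a -> a = b.
Proof. by rewrite /sle => ab ba; rewrite -ba addrC ab. Qed.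

Lemma sle_add (a b c : X) : sle a c -> sle b c -> sle (a + b) c.
Proof. by rewrite /sle => ac bc; rewrite -addrA bc ac. Qed.

Lemma sle_mulr (r a b : X) : sle a b -> sle (a * r) (b * r).
Proof. by rewrite /sle => ab; rewrite -mulrDl ab. Qed.

Lemma sle_mul (a a' b b' : X) : sle a a' -> sle b b' -> sle (a * b) (a' * b').
Proof.
move=> aa' bb'; apply: (sle_trans (sle_mulr b aa')).
by rewrite ![a' * _]mulrC; apply: sle_mulr.
Qed.

Lemma sle_sum (I : finType) (P : pred I) (F : I -> X) (b : X) :
  (forall i, P i -> sle (F i) b) -> sle (\sum_(i | P i) F i) b.
Proof.
move=> Fb; apply: (big_ind (sle^~ b)) => //; first by rewrite /sle add0r.
by move=> a c; apply: sle_add.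
Qed.

Hypothesis hid : idempotent_semiring X.

Lemma sle_addr (a b : X) : sle a (a + b).
Proof. by rewrite /sle addrA hid. Qed.

Lemma sle_sum_term (I : finType) (P : pred I) (F : I -> X) (i0 : I) :
  P i0 -> sle (F i0) (\sum_(i | P i) F i).
Proof. by move=> Pi0; rewrite (bigD1 i0) //; apply: sle_addr. Qed.

Hypothesis hfr : frobenius_semiring X.

Lemma frobenius_exprD (a b : X) (k : nat) : (a + b) ^+ k = a ^+ k + b ^+ k.
Proof. by case: k => [|k]; [rewrite !expr0 hid | apply: hfr]. Qed.

Lemma frobenius_sum (k : nat) (I : Type) (r : seq I) (P : pred I) (F : I -> X) :
  (0 < k)%N -> (\sum_(i <- r | P i) F i) ^+ k = \sum_(i <- r | P i) F i ^+ k.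
Proof.
move=> k_gt0; apply: (big_morph (fun a : X => a ^+ k)) => [a b|].
  exact: hfr.
by rewrite expr0n gtn_eqF.
Qed.

Lemma sle_mul_expr (a b : X) (p q : nat) :
  sle (a ^+ p * b ^+ q) (a ^+ (p + q) + b ^+ (p + q)).
Proof.
rewrite -frobenius_exprD exprD.
by apply: sle_mul; rewrite frobenius_exprD ?[_ + b ^+ q]addrC; apply: sle_addr.
Qed.

End IdempotentOrder.

Definition lower (m : nat) (f : nat -> nat) (i : nat) : nat :=
  if (i < m)%N then f i else 0%N.

Lemma lower_ge (m : nat) (f : nat -> nat) (i : nat) : (m <= i)%N -> lower m f i = 0%N.
Proof. by rewrite /lower ltnNge => ->. Qed.

Lemma card_perm_lt (n m : nat) (t : 'S_n) : (m <= n)%N -> #|[set k | (t k < m)%N]| = m.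
Proof.
move=> le_mn; have -> : [set k | (t k < m)%N] = [set (t^-1)%g (widen_ord le_mn i) | i in 'I_m].
  apply/setP => k; rewrite !inE; apply/idP/imsetP => [lt_tk_m | [i _ ->]].
    by exists (Ordinal lt_tk_m) => //; apply: (@perm_inj _ t); rewrite permKV; apply: val_inj.
  by rewrite permKV /=.
rewrite card_imset ?card_ord // => i i' /perm_inj /(congr1 val) /= eq_ii'.
exact: val_inj.
Qed.

Section Monomials.
Variables (X : comPzSemiRingType) (n : nat) (x : 'I_n -> X).

Definition mon (f : 'I_n -> nat) : X := \prod_k x k ^+ f k.

Lemma mon_add (f g : 'I_n -> nat) : mon f * mon g = mon (fun k => (f k + g k)%N).
Proof. by rewrite /mon -big_split; apply: eq_bigr => k _; rewrite exprD. Qed.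

Lemma SymPoly_monom (m : nat) (f : nat -> nat) :
  SymPoly (monom m f) x = \sum_(t : 'S_n) mon (fun k => lower m f (t k)).
Proof.
rewrite /SymPoly (reindex_inj invg_inj); apply: eq_bigr => t _.
rewrite /monom /mon big_mkcond (reindex_inj (@perm_inj _ t)).
by apply: eq_bigr => k _; rewrite permK /lower; case: ifP.
Qed.

Hypotheses (hid : idempotent_semiring X) (hfr : frobenius_semiring X).

Lemma elem_sym_expr (j c : nat) : (0 < c)%N ->
  elem_sym j x ^+ c = \sum_(S : {set 'I_n} | #|S| == j) mon (fun k => if k \in S then c else 0%N).
Proof.
move=> c_gt0; rewrite /elem_sym frobenius_sum //; apply: eq_bigr => S _.
rewrite -prodrXl /mon big_mkcond; apply: eq_bigr => k _.
by case: ifP.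
Qed.

Lemma sle_mon_exchange (f g g' : 'I_n -> nat) (u s : 'I_n) : u != s ->
  (forall k, k != u -> k != s -> g k = f k /\ g' k = f k) ->
  g u = (f u + f s)%N -> g s = 0%N -> g' u = 0%N -> g' s = (f u + f s)%N ->
  sle (mon f) (mon g + mon g').
Proof.
move=> neq_us eq_off gu gs g'u g's.
have split_us h : mon h = x u ^+ h u * x s ^+ h s * \prod_(k | (k != u) && (k != s)) x k ^+ h k.
  by rewrite /mon (bigD1 u) // (bigD1 s) 1?eq_sym //= mulrA.
rewrite !split_us gu gs g'u g's !expr0 mulr1 mul1r.
have -> : \prod_(k | (k != u) && (k != s)) x k ^+ g k = \prod_(k | (k != u) && (k != s)) x k ^+ f k.
  by apply: eq_bigr => k /andP[ku ks]; have [-> _] := eq_off k ku ks.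
have -> : \prod_(k | (k != u) && (k != s)) x k ^+ g' k = \prod_(k | (k != u) && (k != s)) x k ^+ f k.
  by apply: eq_bigr => k /andP[ku ks]; have [_ ->] := eq_off k ku ks.
by rewrite -mulrDl; apply/sle_mulr/sle_mul_expr.
Qed.

End Monomials.

Section SplitExponents.
Variables (X : comPzSemiRingType) (n j : nat) (d : nat -> nat) (x : 'I_n -> X).
Hypothesis hd : forall a b : nat, (a <= b)%N -> (b < j)%N -> (d b <= d a)%N.

Local Notation c := (d j.-1).
Local Notation e := (lower j.-1 (fun i => (d i - d j.-1)%N)).

Lemma lower_split (i : nat) : lower j d i = ((if (i < j)%N then c else 0) + e i)%N.
Proof.
rewrite /lower; case: ltnP => lt_ij; case: ltnP => lt_ij' //; try lia.
  have : (c <= d i)%N by apply: hd; lia.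
  lia.
by rewrite addn0; congr d; lia.
Qed.

Hypotheses (hj1 : (1 <= j)%N) (hjn : (j <= n)%N).

(* The term of [elem_sym j x ^+ c * SymPoly (monom j.-1 _) x] indexed by a
   [j]-set [S] and a permutation [t]. *)
Definition split_exp (S : {set 'I_n}) (t : 'S_n) (k : 'I_n) : nat :=
  ((if k \in S then c else 0) + e (t k))%N.

Definition front (t : 'S_n) : {set 'I_n} := [set k | (t k < j.-1)%N].

Lemma card_front (t : 'S_n) : #|front t| = j.-1.
Proof. by rewrite card_perm_lt //; lia. Qed.

Lemma exists_notin_front (t : 'S_n) (S : {set 'I_n}) :
  #|S| = j -> exists2 s, s \in S & s \notin front t.
Proof.
move=> cardS; apply/subsetPn; apply: contraTN isT => /subset_leq_card.
by rewrite card_front cardS; lia.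
Qed.

Lemma split_exp_front_subset (S : {set 'I_n}) (t : 'S_n) :
  #|S| = j -> front t \subset S -> exists t' : 'S_n, forall k, split_exp S t k = lower j d (t' k).
Proof.
move=> cardS frontS.
have [k0 k0S k0front] := exists_notin_front t cardS.
have defS : k0 |: front t = S.
  apply/eqP; rewrite eqEcard subUset sub1set k0S frontS cardsU1 k0front card_front cardS.
  by lia.
have le_tk0 : (j.-1 <= t k0)%N by move: k0front; rewrite inE; lia.
have lt_jn : (j.-1 < n)%N by lia.
pose t' := (t * tperm (t k0) (Ordinal lt_jn))%g.
exists t' => k; rewrite lower_split /split_exp -defS !inE /t' permM.
have eq_k0 : (k == k0) = (t k == t k0) by rewrite (inj_eq (@perm_inj _ t)).
case: tpermP => [tk | tk | ne_tk0 ne_tkj].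
- by rewrite eq_k0 tk eqxx !lower_ge //= ltn_predL hj1.
- rewrite eq_k0 tk !lower_ge //= ltnn orbF -val_eqE /=.
  by congr ((if _ then _ else _) + _)%N; lia.
- have ne_tkj' : (t k : nat) <> j.-1 by move=> tkj; apply/ne_tkj/val_inj.
  rewrite eq_k0 (introF eqP ne_tk0) /=.
  by congr ((if _ then _ else _) + _)%N; lia.
Qed.

Hypotheses (hid : idempotent_semiring X) (hfr : frobenius_semiring X).

Lemma sle_split_exp_exchange (S : {set 'I_n}) (t : 'S_n) (u s : 'I_n) :
  u \in front t :\: S -> s \in S :\: front t ->
  sle (mon x (split_exp S t))
      (mon x (split_exp (u |: S :\ s) t) + mon x (split_exp S (tperm u s * t)%g)).
Proof.
rewrite !inE => /andP[uS ufront] /andP[sfront sS].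
have neq_us : u != s by apply: contraNneq uS => ->.
have ets : e (t s) = 0%N by apply: lower_ge; rewrite leqNgt.
apply: (sle_mon_exchange x hid hfr neq_us) => [k ku ks||||];
  rewrite /split_exp ?inE ?permM ?tpermL ?tpermR ?eqxx ?(negbTE uS) ?sS ?ets //=.
- by rewrite (negbTE ku) ks tpermD ?(eq_sym u k) ?(eq_sym s k).
- by rewrite add0n addn0 addnC.
- by rewrite eq_sym (negbTE neq_us).
- by rewrite add0n addn0 addnC.
Qed.

Lemma front_exchange (S : {set 'I_n}) (t : 'S_n) (u s : 'I_n) :
  u \in front t :\: S -> s \in S :\: front t ->
  front t :\: (u |: S :\ s) = (front t :\: S) :\ u /\
  front (tperm u s * t)%g :\: S = (front t :\: S) :\ u.
Proof.
rewrite !inE => /andP[uS ufront] /andP[sfront sS].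
split; apply/setP => k; rewrite !inE ?permM.
  case: (eqVneq k u) => [->|ku]; first by [].
  by case: (eqVneq k s) => [->|ks] /=; rewrite ?sS ?(negbTE sfront) ?andbF.
case: (eqVneq k u) => [->|ku]; first by rewrite tpermL (negbTE sfront) andbF.
case: (eqVneq k s) => [->|ks]; first by rewrite sS andbF.
by rewrite tpermD ?(eq_sym u k) ?(eq_sym s k).
Qed.

Lemma sle_split_exp_sym (S : {set 'I_n}) (t : 'S_n) : #|S| = j ->
  sle (mon x (split_exp S t)) (\sum_(t' : 'S_n) mon x (fun k => lower j d (t' k))).
Proof.
have [m] := ubnP #|front t :\: S|; elim: m S t => // m IH S t lt_defect cardS.
have [s sS sfront] := exists_notin_front t cardS.
have [frontS | /subsetPn[u ufront uS]] := boolP (front t \subset S).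
  have [t' eq_t'] := split_exp_front_subset cardS frontS.
  have -> : mon x (split_exp S t) = mon x (fun k => lower j d (t' k)).
    by apply: eq_bigr => k _; rewrite eq_t'.
  exact: (sle_sum_term hid _ (isT : predT t')).
have uSfront : u \in front t :\: S by rewrite inE uS.
have sSfront : s \in S :\: front t by rewrite inE sfront.
have [defect1 defect2] := front_exchange uSfront sSfront.
have lt_defect' : (#|(front t :\: S) :\ u| < m)%N by move: lt_defect; rewrite (cardsD1 u) uSfront.
apply: sle_trans (sle_split_exp_exchange uSfront sSfront) _.
apply: sle_add; apply: IH; rewrite ?defect1 ?defect2 //.
by move: cardS; rewrite cardsU1 !inE (negbTE uS) andbF (cardsD1 s S) sS.
Qed.

Lemma sym_sle_split_sum :
  sle (\sum_(t : 'S_n) mon x (fun k => lower j d (t k)))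
      (\sum_(S : {set 'I_n} | #|S| == j) \sum_(t : 'S_n) mon x (split_exp S t)).
Proof.
apply: sle_sum => t _.
have cardS : #|[set k | (t k < j)%N]| == j by rewrite card_perm_lt.
apply: sle_trans (sle_sum_term hid _ cardS).
have -> : mon x (fun k => lower j d (t k)) = mon x (split_exp [set k | (t k < j)%N] t).
  by apply: eq_bigr => k _; rewrite lower_split /split_exp inE.
exact: (sle_sum_term hid _ (isT : predT t)).
Qed.

Lemma split_sum_sle_sym :
  sle (\sum_(S : {set 'I_n} | #|S| == j) \sum_(t : 'S_n) mon x (split_exp S t))
      (\sum_(t : 'S_n) mon x (fun k => lower j d (t k))).
Proof. by apply: sle_sum => S /eqP cardS; apply: sle_sum => t _; apply: sle_split_exp_sym. Qed.

Lemma elem_sym_expr_mul_sym : (0 < c)%N ->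
  elem_sym j x ^+ c * \sum_(t : 'S_n) mon x (fun k => e (t k)) =
  \sum_(S : {set 'I_n} | #|S| == j) \sum_(t : 'S_n) mon x (split_exp S t).
Proof.
move=> c_gt0; rewrite (elem_sym_expr x hfr) // mulr_suml; apply: eq_bigr => S _.
by rewrite mulr_sumr; apply: eq_bigr => t _; rewrite mon_add.
Qed.

End SplitExponents.

Theorem lemma4p4 (X : comPzSemiRingType) (hid : idempotent_semiring X)
  (hfr : frobenius_semiring X) (n : nat) (hn : (1 <= n)%N)
  (j : nat) (hj1 : (1 <= j)%N) (hjn : (j <= n)%N) (d : nat -> nat)
  (hd : forall a b : nat, (a <= b)%N -> (b < j)%N -> (d b <= d a)%N) :
  forall x : 'I_n -> X,
    SymPoly (monom j d) x =
    elem_sym j x ^+ d j.-1 *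
      SymPoly (monom j.-1 (fun i => (d i - d j.-1)%N)) x.
Proof.
move=> x; rewrite !SymPoly_monom.
have [c0 | c_gt0] := posnP (d j.-1).
  rewrite c0 expr0 mul1r; apply: eq_bigr => t _; apply: eq_bigr => k _.
  by rewrite (lower_split hd) c0 if_same.
rewrite (elem_sym_expr_mul_sym x hfr c_gt0).
by apply: sle_anti; [apply: sym_sle_split_sum | apply: split_sum_sle_sym].
Qed.
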